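(* For every $\zeta\in\{0,1\}^H$, every $L>0$ and every $K\ge L+2$: on the event that $D^\zeta_K$ is $L$-thin in $H$, we have $\Delta^\zeta\subset D^\zeta_K$. In particular, if $D^\zeta_K$ is $L$-thin in $H$, then $\Delta^\zeta$ is $L$-thin in $H$.
   Context: Fix $\lambda>0$, $d\ge2$, $H=\{0,1\}^d\subset\mathbb{Z}^d$; for $x\in H$ let $\mathcal{N}_{H,x}$ be the set of nearest neighbours of $x$ (in $\mathbb{Z}^d$) lying in $H$. Each site carries independent Poisson processes of rate $1$ (down marks) and rate $\lambda$ (up marks), independent over sites. For $\zeta\in\{0,1\}^H$, the threshold $2$ contact process $(\eta^\zeta_{H;t})_{t\ge0}$ on $H$ starts from $\zeta$; at a down mark at $x$ the spin becomes $0$; at an up mark at $x$ at time $t$ the spin becomes $1$ if at least $2$ sites of $\mathcal{N}_{H,x}$ are in state $1$ just before $t$. The independent flip process $(\pi^\zeta_{H;t})$ starts from $\zeta$ and sets the spin at $x$ to $0$ at each down mark and to $1$ at each up mark at $x$. $\Delta^\zeta=\bigcup_{t\in[0,d^2]}\{x\in H:\eta^\zeta_{H;t}(x)\ne\pi^\zeta_{H;t}(x)\}$. A site $x\in H$ is $(\zeta,K)$-dangerous if there is some $t\in[0,d^2]$ at which fewer than $K$ sites of $\mathcal{N}_{H,x}$ are in state $1$ in $\pi^\zeta_{H;t}$; $D^\zeta_K$ is the set of $(\zeta,K)$-dangerous sites. A set $S$ is $L$-thin in $H$ if $|S\cap\mathcal{N}_{H,x}|\le L$ for all $x\in H$. 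*)

From HB Require Import structures.
From mathcomp Require Import all_boot all_order all_algebra.
From mathcomp Require Import boolp reals.
Set Implicit Arguments. Unset Strict Implicit. Unset Printing Implicit Defensive.
Import Order.TTheory GRing.Theory Num.Theory.
Local Open Scope ring_scope.

Definition site (d : nat) := {ffun 'I_d -> bool}.

(* Nearest neighbours in Z^d that lie in H: differ in exactly one coordinate. *)
Definition nbrs (d : nat) (x : site d) : {set site d} :=
  [set y : site d | #|[set i : 'I_d | x i != y i]| == 1%N].

Definition config (d : nat) := {ffun site d -> bool}.

Definition upd (d : nat) (c : config d) (x : site d) (b : bool) : config d :=
  [ffun y => if y == x then b else c y].

Definition nb_on (d : nat) (c : config d) (x : site d) : nat :=
  #|[set y in nbrs x | c y]|.

(* A mark: (time, (site, kind)), kind = true for an up mark, false for a down mark. *)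
Definition mark (R : realType) (d : nat) := (R * (site d * bool))%type.

Definition all_marks (R : realType) (d : nat) (dn up : site d -> seq R)
  : seq (mark R d) :=
  flatten [seq [seq (t, (x, false)) | t <- dn x] ++ [seq (t, (x, true)) | t <- up x]
          | x <- enum (site d)].

Definition chrono (R : realType) (d : nat) (dn up : site d -> seq R) : seq (mark R d) :=
  sort (fun e f : mark R d => e.1 <= f.1) (all_marks dn up).

Definition tc_step (R : realType) (d : nat) (c : config d) (e : mark R d) : config d :=
  let: (_, (x, k)) := e in
  if k then (if (2 <= nb_on c x)%N then upd c x true else c) else upd c x false.

Definition if_step (R : realType) (d : nat) (c : config d) (e : mark R d) : config d :=
  let: (_, (x, k)) := e in upd c x k.

(* State at time t (right-continuous: marks at times <= t are applied). *)
Definition eta (R : realType) (d : nat) (dn up : site d -> seq R) (zeta : config d) (t : R)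
  : config d :=
  foldl (@tc_step R d) zeta [seq e <- chrono dn up | e.1 <= t].

Definition pi_ (R : realType) (d : nat) (dn up : site d -> seq R) (zeta : config d) (t : R)
  : config d :=
  foldl (@if_step R d) zeta [seq e <- chrono dn up | e.1 <= t].

Definition Delta (R : realType) (d : nat) (dn up : site d -> seq R) (zeta : config d)
  : {set site d} :=
  [set x | `[< exists t : R, [/\ 0 <= t, t <= (d ^ 2)%:R &
                eta dn up zeta t x != pi_ dn up zeta t x] >] ].

Definition Dang (R : realType) (d : nat) (dn up : site d -> seq R) (zeta : config d)
  (K : nat) : {set site d} :=
  [set x | `[< exists t : R, [/\ 0 <= t, t <= (d ^ 2)%:R &
                (nb_on (pi_ dn up zeta t) x < K)%N] >] ].

Definition thin (d : nat) (S : {set site d}) (L : nat) : Prop :=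
  forall x : site d, (#|S :&: nbrs x| <= L)%N.

(* Almost-sure properties of a Poisson realization: all mark times are
   positive and pairwise distinct (across sites and kinds). *)
Definition generic (R : realType) (d : nat) (dn up : site d -> seq R) : Prop :=
  uniq [seq e.1 | e <- all_marks dn up] /\ all (fun e : mark R d => 0 < e.1) (all_marks dn up).

From Pilot Require Import Defs.
From HB Require Import structures.
From mathcomp Require Import all_boot all_order all_algebra.
From mathcomp Require Import boolp reals.
Import Order.TTheory GRing.Theory Num.Theory.

Set Implicit Arguments.
Unset Strict Implicit.
Unset Printing Implicit Defensive.

(* Run both processes through the chronologically ordered marks up to a time
   t <= d^2 and show that after every mark they differ only on dangerous
   sites.  Down marks act identically on both processes.  At an up mark at a
   safe site z the independent flip process sees at least K occupied
   neighbours of z; the contact process differs from it only on dangerous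
   sites, of which z has at most L neighbours, so it still sees at least
   K - L >= 2 occupied neighbours and flips z up as well. *)

Section SortedPrefix.
Variables (disp : Order.disp_t) (O : orderType disp) (T : eqType) (key : T -> O).
Local Open Scope order_scope.

Lemma take_nth_sorted_uniq (x0 : T) (s : seq T) (i : nat) :
  sorted (fun x y => key x <= key y) s -> uniq (map key s) -> (i < size s)%N ->
  take i.+1 s = [seq y <- s | key y <= key (nth x0 s i)].
Proof.
have le_trans_key : transitive (fun x y => key x <= key y).
  by move=> y x z; exact: le_trans.
elim: s i => [|x s IH] [|i] //= Hs /andP[xNs Us] Hi;
  move: (order_path_min le_trans_key Hs) => /allP x_min.
- rewrite lexx take0 -(filter_pred0 s); congr (_ :: _).
  apply: eq_in_filter => y ys /=; rewrite lt_geF // lt_neqAle x_min // andbT.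
  by apply: contraNneq xNs => ->; exact: map_f.
- rewrite (le_trans (x_min _ (mem_nth x0 Hi))) //.
  by congr (_ :: _); apply: IH => //; exact: path_sorted Hs.
Qed.

End SortedPrefix.

Section NeighbourCounts.
Variable d : nat.

Lemma nb_on_upd (c : config d) (x : site d) (b : bool) :
  nb_on (upd c x b) x = nb_on c x.
Proof.
apply: eq_card => y; rewrite !inE ffunE.
case: (y =P x) => // ->; rewrite (_ : [set i | x i != x i] = set0) ?cards0 //.
by apply/setP => i; rewrite !inE eqxx.
Qed.

Lemma nb_on_le_diff (p q : config d) (D : {set site d}) (x : site d) :
  (forall y, p y != q y -> y \in D) ->
  (nb_on p x <= nb_on q x + #|D :&: nbrs x|)%N.
Proof.
move=> pqD; apply: leq_trans (leq_card_setU _ _); apply: subset_leq_card.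
apply/subsetP => y; rewrite !inE => /andP[yx py].
case qy: (q y); first by rewrite yx.
by rewrite yx pqD ?orbT // py qy.
Qed.

Lemma step_diff_sub (R : realType) (D : {set site d}) (pe pp : config d)
    (t : R) (z : site d) (k : bool) :
  (forall y, pe y != pp y -> y \in D) ->
  (k -> z \notin D -> (#|D :&: nbrs z| + 2 <= nb_on pp z)%N) ->
  forall y, tc_step pe (t, (z, k)) y != if_step pp (t, (z, k)) y -> y \in D.
Proof.
move=> peD safe_up y; case: k safe_up => [safe_up|_] /=; last first.
  by rewrite !ffunE; case: (y =P z) => // _; exact: peD.
case: ifP => [_|refuse]; rewrite !ffunE; case: (y =P z) => [->|_]; try exact: peD.
  by rewrite eqxx.
move=> _; apply: contraFT refuse => zND.
have ppD y' : pp y' != pe y' -> y' \in D by rewrite eq_sym; exact: peD.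
rewrite -(leq_add2r #|D :&: nbrs z|) addnC.
exact: leq_trans (safe_up isT zND) (nb_on_le_diff z ppD).
Qed.

End NeighbourCounts.

Section ProcessesUpTo.
Variables (R : realType) (d : nat) (dn up : site d -> seq R).
Hypothesis hgen : generic dn up.
Variable zeta : config d.
Local Open Scope ring_scope.

Let mark0 : mark R d := (0, ([ffun=> false], false)).

Let marks_upto (t : R) := [seq e <- chrono dn up | e.1 <= t].

Lemma marks_upto_sorted_uniq (t : R) :
  sorted (fun e f : mark R d => e.1 <= f.1) (marks_upto t) /\
  uniq (map fst (marks_upto t)).
Proof.
have chrono_perm : perm_eq (chrono dn up) (all_marks dn up) by rewrite perm_sort.
split.
  apply: sorted_filter; first by move=> ? ? ?; exact: le_trans.
  by apply: sort_sorted => e f; exact: le_total.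
apply: subseq_uniq (map_subseq _ (filter_subseq _ _)) _.
by rewrite (perm_uniq (perm_map _ chrono_perm)); case: hgen.
Qed.

Lemma pi_at_mark (t : R) (n : nat) : (n < size (marks_upto t))%N ->
  pi_ dn up zeta (nth mark0 (marks_upto t) n).1 =
  foldl (@if_step R d) zeta (take n.+1 (marks_upto t)).
Proof.
move=> Hn; have [Hs Hu] := marks_upto_sorted_uniq t.
rewrite (take_nth_sorted_uniq mark0 Hs Hu Hn) -filter_predI /pi_.
congr foldl; apply: eq_filter => f /=.
have : nth mark0 (marks_upto t) n \in marks_upto t by exact: mem_nth.
rewrite mem_filter => /andP[ent _].
by case: (boolP (f.1 <= _)) => //= /le_trans ->.
Qed.

Lemma marks_upto_pos (t : R) (e : mark R d) : e \in marks_upto t -> 0 < e.1.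
Proof.
rewrite mem_filter mem_sort => /andP[_].
by case: hgen => _ /allP; apply.
Qed.

(* Plain [eta] refers to HB's eta-expansion here, hence [Defs.eta]. *)
Lemma eta_pi_diff_Dang (L K : nat) (hK : (L + 2 <= K)%N) (t : R) :
  0 <= t -> t <= (d ^ 2)%:R -> thin (Dang dn up zeta K) L ->
  forall y : site d,
    Defs.eta dn up zeta t y != pi_ dn up zeta t y -> y \in Dang dn up zeta K.
Proof.
move=> t0 td Dthin; set D := Dang dn up zeta K.
suff prefix_diff n : (n <= size (marks_upto t))%N -> forall y,
    foldl (@tc_step R d) zeta (take n (marks_upto t)) y !=
    foldl (@if_step R d) zeta (take n (marks_upto t)) y -> y \in D.
  move=> y; rewrite /Defs.eta /pi_ -[filter _ _]/(marks_upto t) -[marks_upto t]take_size.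
  exact: prefix_diff.
elim: n => [|n IH] Hn y; first by rewrite take0 eqxx.
rewrite (take_nth mark0 Hn) !foldl_rcons.
have e_in : nth mark0 (marks_upto t) n \in marks_upto t by exact: mem_nth.
have e_pos := marks_upto_pos e_in.
move: e_in; rewrite mem_filter => /andP[et _].
have := pi_at_mark Hn; rewrite (take_nth mark0 Hn) foldl_rcons.
case: (nth _ _ n) et e_pos => te [z k] et e_pos pi_te.
apply: step_diff_sub y; first exact: IH (ltnW Hn).
move=> kup zND; move: pi_te; rewrite kup /= => pi_te.
apply: leq_trans (leq_add (Dthin z) (leqnn 2)) _.
apply: leq_trans hK _; rewrite -(nb_on_upd _ z true) -pi_te leqNgt.
apply: contra zND => lt_K; rewrite inE; apply/asboolP.
by exists te; split; [exact: ltW | exact: le_trans td |].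
Qed.

End ProcessesUpTo.

Theorem lemma3p1 (d : nat) (hd : (2 <= d)%N) (R : realType)
  (dn up : site d -> seq R) (hgen : generic dn up)
  (zeta : config d) (L K : nat) (hL : (0 < L)%N) (hK : (L + 2 <= K)%N) :
  thin (Dang dn up zeta K) L ->
  Delta dn up zeta \subset Dang dn up zeta K /\ thin (Delta dn up zeta) L.
Proof.
move=> Dthin.
have DeltaD : Delta dn up zeta \subset Dang dn up zeta K.
  apply/subsetP => x; rewrite inE => /asboolP[t [t0 td]].
  move=> Hx; exact (eta_pi_diff_Dang hgen hK t0 td Dthin Hx).
split=> // x; apply: leq_trans (Dthin x).
by apply: subset_leq_card; exact: setSI.
Qed.
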